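(* Let $\mathbf C$ be a finite-type chain complex of real inner product spaces, let $I^\Delta$ be a Hodge basis, and let $M^\Delta$ be the Hodge matching on $(\mathbf C,I^\Delta)$. Then $M^\Delta$ is a Morse matching, the critical cells of degree $n$ span $\operatorname{Ker}\Delta_n$ for every $n$ (where $\Delta$ is the combinatorial Laplacian of $\mathbf C$), and the boundary operator of the Morse complex $\mathbf C^{M^\Delta}$ is zero.
   Context: $\mathbf C$ is a chain complex $(\mathbf C,\partial)$ of finite-dimensional real inner product spaces $\mathbf C_n$, $n\ge0$; $\partial^\dagger$ is the adjoint and $\Delta_n=\partial_n^\dagger\partial_n+\partial_{n+1}\partial_{n+1}^\dagger$. A Hodge basis: in each degree choose, via singular value decompositions, orthonormal bases $\mathcal R_+(\partial_m)$ of $\operatorname{Im}\partial_m^\dagger\subseteq\mathbf C_m$ and $\mathcal L_+(\partial_m)$ of $\operatorname{Im}\partial_m\subseteq\mathbf C_{m-1}$ with a bijection $v\mapsto w$ such that $\partial_m v=\sigma w$ with $\sigma>0$, and a basis $\mathcal B(\operatorname{Ker}\Delta_n)$; then $I^\Delta_n=\mathcal L_+(\partial_{n+1})\cup\mathcal R_+(\partial_n)\cup\mathcal B(\operatorname{Ker}\Delta_n)$, and $\mathbf C$ is based by the one-dimensional summands spanned by these vectors. The Hodge matching is $M^\Delta=\bigcup_i\{v\to w: v\in\mathcal R_+(\partial_i),w\in\mathcal L_+(\partial_i),\partial_iv=\sigma w,\sigma\ne0\}$. For a based complex with summands $C_\alpha$, $\partial_{\beta,\alpha}=\pi_\beta\partial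 i_\alpha$; the graph has an edge $\alpha\to\beta$ when $\partial_{\beta,\alpha}\ne0$; a Morse matching is an edge set $M$ with each cell on at most one edge, each $\partial_{\beta,\alpha}$ ($\alpha\to\beta\in M$) an isomorphism, and ''directed path from $\alpha$ to $\beta$ in the graph with $M$ reversed'' a partial order on each degree. Critical cells are unmatched ones. The Morse complex has chain groups spanned by critical cells and boundary $x\mapsto\sum_{\beta \text{ critical}}\Gamma_{\beta,\alpha}(x)$, where $\Gamma_{\beta,\alpha}$ sums, over directed paths from $\alpha$ to $\beta$ in the graph with $M$ reversed, the composite of $\partial_{\sigma_{i+1},\sigma_i}$ (ordinary steps) and $-\partial_{\sigma_i,\sigma_{i+1}}^{-1}$ (reversed matched edges). *)

From HB Require Import structures.
From mathcomp Require Import all_boot all_order all_algebra.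
From mathcomp Require Import reals.
Set Implicit Arguments. Unset Strict Implicit. Unset Printing Implicit Defensive.
Import Order.TTheory GRing.Theory Num.Theory.
Local Open Scope ring_scope.

(* Generic discrete Morse theory for a based complex all of whose summands  *)
(* C_alpha are one-dimensional, spanned by a basis vector e_alpha.  Then    *)
(*   partial_{beta,alpha} = pi_beta o partial o i_alpha : e_alpha |->       *)
(*   cf alpha beta *: e_beta,                                               *)
(* where cf alpha beta is the e_beta-coordinate of partial e_alpha.  Such   *)
(* a map is nonzero (an edge) iff it is an isomorphism iff cf <> 0, and     *)
(* composites / inverses of such maps are products / inverses of scalars.   *)
Section Morse.
Variables (R : fieldType) (T : eqType) (deg : T -> nat) (cf : T -> T -> R).

Definition edge (x y : T) : bool := cf x y != 0.

Variable M : T -> T -> bool.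

(* the graph with the edges of M reversed *)
Definition gM (x y : T) : bool := (edge x y && ~~ M x y) || (M y x && edge y x).

Definition reach (x y : T) : Prop :=
  exists p : seq T, path gM x p && (last x p == y).

Definition is_morse_matching : Prop :=
  [/\
      (forall x y, M x y -> cf x y != 0),
      (* each cell lies on at most one edge of M *)
      (forall x1 y1 x2 y2, M x1 y1 -> M x2 y2 ->
          [|| x1 == x2, x1 == y2, y1 == x2 | y1 == y2] -> x1 = x2 /\ y1 = y2)
    &
      (forall n x y z, deg x = n -> deg y = n -> deg z = n ->
          [/\ reach x x,
              (reach x y -> reach y x -> x = y)
            & (reach x y -> reach y z -> reach x z)])].

Definition critical (x : T) : Prop := forall y, ~~ M x y /\ ~~ M y x.

(* contribution of one step x -> y of a path in the graph with M reversed: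
   partial_{y,x} for an ordinary step, - partial_{x,y}^{-1} for a reversed
   matched edge y -> x *)
Definition step_weight (x y : T) : R := if M y x then - (cf y x)^-1 else cf x y.

Fixpoint path_weight (x : T) (p : seq T) : R :=
  if p is y :: q then step_weight x y * path_weight y q else 1.

(* When U contains every cell and the graph is acyclic
   (as for a Morse matching), this is the sum over all directed paths. *)
Definition Gamma (U : finType) (emb : U -> T) (y x : T) : R :=
  \sum_(k < #|U|.+1) \sum_(t : k.-tuple U |
      path gM x (map emb t) && (last x (map emb t) == y))
    path_weight x (map emb t).

End Morse.

(* Chain complexes of finite-dimensional real inner product spaces.  C_n is *)
(* modelled as row vectors 'rV[R]_(cdim n) with the standard inner product   *)
(* <u,v> = u *m v^T; the boundary partial_{k+1} : C_{k+1} -> C_k is        *)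
(* v |-> v *m bd k, so its adjoint is w |-> w *m (bd k)^T; partial_0 = 0.   *)
Record cplx (R : realType) := Cplx {
  cdim : nat -> nat;
  bd : forall k : nat, 'M[R]_(cdim k.+1, cdim k)
}.

Section Complex.
Variables (R : realType) (C : cplx R).

Definition is_chain_complex : Prop := forall k, bd C k.+1 *m bd C k = 0.

Definition finite_type (N : nat) : Prop := forall n, (N <= n)%N -> cdim C n = 0%N.

Definition Lap (n : nat) : 'M[R]_(cdim C n) :=
  (match n return 'M[R]_(cdim C n) with
   | 0 => 0
   | k.+1 => bd C k *m (bd C k)^T
   end) + (bd C n)^T *m bd C n.

Definition bdm (n m : nat) (v : 'rV[R]_(cdim C n)) : 'rV[R]_(cdim C m) :=
  match n =P m.+1 with
  | ReflectT e => castmx (erefl 1%N, congr1 (cdim C) e) v *m bd C m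
  | ReflectF _ => 0
  end.

(* For the boundary partial_{k+1}: the rows of
   Rv k (in C_{k+1}) form R_+(partial_{k+1}), the rows of Lv k (in C_k) form
   L_+(partial_{k+1}); the bijection v |-> w is row i |-> row i, with singular
   value sv k i.  The rows of Kb n form B(Ker Delta_n). *)
Record hbasis := HBasis {
  rk : nat -> nat;
  Rv : forall k, 'M[R]_(rk k, cdim C k.+1);
  Lv : forall k, 'M[R]_(rk k, cdim C k);
  sv : forall k, 'I_(rk k) -> R;
  hk : nat -> nat;
  Kb : forall n, 'M[R]_(hk n, cdim C n)
}.
Arguments sv h k i : clear implicits.

Definition is_hodge_basis (H : hbasis) : Prop :=
  [/\
      (forall k, Rv H k *m (Rv H k)^T = 1%:M /\ (Rv H k == (bd C k)^T)%MS),
      (forall k, Lv H k *m (Lv H k)^T = 1%:M /\ (Lv H k == bd C k)%MS),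
      (forall k (i : 'I_(rk H k)),
          0 < sv H k i /\ row i (Rv H k) *m bd C k = sv H k i *: row i (Lv H k))
    &
      (forall n, row_free (Kb H n) /\
         forall v : 'rV[R]_(cdim C n), (v <= Kb H n)%MS <-> v *m Lap n = 0)].

Variable H : hbasis.

(* number of cells of R_+(partial_n) (none for n = 0) *)
Definition rkR (n : nat) : nat := if n is k.+1 then rk H k else 0%N.

(* the cells of degree n:  I^Delta_n = L_+(partial_{n+1}) u R_+(partial_n)
   u B(Ker Delta_n) *)
Definition cells (n : nat) : finType := (('I_(rk H n) + 'I_(rkR n)) + 'I_(hk H n))%type.

Definition vecR (n : nat) : 'I_(rkR n) -> 'rV[R]_(cdim C n) :=
  match n return 'I_(rkR n) -> 'rV[R]_(cdim C n) with
  | 0 => fun _ => 0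
  | k.+1 => fun i => row i (Rv H k)
  end.

Definition cvec (n : nat) (a : cells n) : 'rV[R]_(cdim C n) :=
  match a with
  | inl (inl i) => row i (Lv H n)
  | inl (inr i) => vecR i
  | inr i => row i (Kb H n)
  end.

Definition Bmat (n : nat) : 'M[R]_(#|cells n|, cdim C n) :=
  \matrix_(j < #|cells n|, c < cdim C n) cvec (enum_val j) 0 c.

Definition ccoord (m : nat) (b : cells m) (w : 'rV[R]_(cdim C m)) : R :=
  (w *m pinvmx (Bmat m)) 0 (enum_rank b).

Definition gcell := {n : nat & cells n}.

Definition hcf (x y : gcell) : R :=
  ccoord (tagged y) (bdm (tag y) (cvec (tagged x))).

Definition hmatch (x y : gcell) : bool :=
  match x, y with
  | existT n (inl (inr i)), existT m (inl (inl j)) =>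
      (n == m.+1) && (val i == val j) && (sv H m j != 0)
  | _, _ => false
  end.

Definition ucell (N : nat) : finType := {n : 'I_N & cells n}.
Definition uemb (N : nat) (u : ucell N) : gcell := existT _ (val (tag u)) (tagged u).

End Complex.

Arguments hcf {R C} H x y.
Arguments hmatch {R C} H x y.
Arguments uemb {R C H} N u.

(* In a Hodge basis the boundary is diagonal: it kills the vectors of
   L_+(partial_{n+1}) (as partial o partial = 0) and the harmonic vectors
   (Ker Delta = Ker partial /\ Ker partial^dag), and sends each vector of
   R_+(partial_n) to a positive multiple of its partner in L_+(partial_n).
   Hence the edges of the based complex are exactly the pairwise disjoint
   edges of M^Delta, so in the graph with M^Delta reversed every path has
   length at most one and no edge leaves a critical cell: M^Delta is a Morse
   matching, its critical cells are the harmonic basis vectors, and every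
   Gamma between two distinct critical cells is an empty sum. *)

From HB Require Import structures.
From mathcomp Require Import all_boot all_order all_algebra.
From mathcomp Require Import reals.
Set Implicit Arguments. Unset Strict Implicit. Unset Printing Implicit Defensive.
Import Order.TTheory GRing.Theory Num.Theory.
Local Open Scope ring_scope.

Section EdgeMatching.
Variables (R : fieldType) (T : eqType) (deg : T -> nat) (cf : T -> T -> R).
Variable M : T -> T -> bool.

Hypothesis M_edge : forall x y, M x y = edge cf x y.
Hypothesis M_functional : forall x y1 y2, M x y1 -> M x y2 -> y1 = y2.
Hypothesis M_injective : forall x1 x2 y, M x1 y -> M x2 y -> x1 = x2.
Hypothesis M_chain_free : forall x y z, M x y -> M y z -> False.
Hypothesis M_deg : forall x y, M x y -> deg x = (deg y).+1.

Lemma gME x y : gM cf M x y = M y x.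
Proof. by rewrite /gM -!M_edge andbN andbb. Qed.

Lemma reach_same_deg x y : reach cf M x y -> deg x = deg y -> x = y.
Proof.
case=> [[|z [|z' p]]] /=; rewrite ?gME.
- by move=> /eqP.
- by rewrite andbT => /andP[zx /eqP <-]; rewrite (M_deg zx) => /n_Sn.
- by case/andP => /and3P[zx z'z _] _; case: (M_chain_free z'z zx).
Qed.

Lemma edge_matching_is_morse : is_morse_matching deg cf M.
Proof.
split.
- by move=> x y; rewrite M_edge.
- move=> x1 y1 x2 y2 m1 m2 /or4P[] /eqP e; subst.
  + by rewrite (M_functional m1 m2).
  + by case: (M_chain_free m2 m1).
  + by case: (M_chain_free m1 m2).
  + by rewrite (M_injective m1 m2).
- move=> n x y z dx dy dz; split.
  + by exists [::]; rewrite /= eqxx.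
  + by move=> /reach_same_deg -> //; rewrite dx dy.
  + by move=> /reach_same_deg -> //; rewrite dx dy.
Qed.

Lemma Gamma_critical_eq0 (U : finType) (emb : U -> T) x y :
  critical M x -> y != x -> Gamma cf M emb y x = 0.
Proof.
move=> crit_x yx; rewrite /Gamma big1 // => k _; rewrite big_pred0 // => t.
case: (map emb t) => [|z p] /=; first by rewrite eq_sym (negbTE yx).
by rewrite gME (negbTE (proj2 (crit_x z))).
Qed.

End EdgeMatching.

Section Gram.
Variable R : realFieldType.

Lemma dotmxE n (u : 'rV[R]_n) : (u *m u^T) 0 0 = \sum_i u 0 i ^+ 2.
Proof. by rewrite !mxE; apply: eq_bigr => i _; rewrite !mxE expr2. Qed.

Lemma dotmx_ge0 n (u : 'rV[R]_n) : 0 <= (u *m u^T) 0 0.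
Proof. by rewrite dotmxE sumr_ge0 // => i _; rewrite sqr_ge0. Qed.

Lemma dotmx_eq0 n (u : 'rV[R]_n) : (u *m u^T) 0 0 = 0 -> u = 0.
Proof.
rewrite dotmxE => /psumr_eq0P u0; apply/rowP => i; rewrite mxE.
by apply/eqP; rewrite -sqrf_eq0 u0 // => j _; rewrite sqr_ge0.
Qed.

Lemma mulmx_gram_sum_eq0 p m n q (A : 'M[R]_(p, m)) (X : 'M_(m, n)) (Y : 'M_(q, m)) :
  A *m (X *m X^T + Y^T *m Y) = 0 -> A *m X = 0 /\ A *m Y^T = 0.
Proof.
have row_case (v : 'rV_m) : v *m (X *m X^T + Y^T *m Y) = 0 ->
    v *m X = 0 /\ v *m Y^T = 0.
  move=> v0; have : (v *m (X *m X^T + Y^T *m Y) *m v^T) 0 0 = 0.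
    by rewrite v0 mul0mx mxE.
  rewrite mulmxDr mulmxDl mxE.
  have -> : v *m (Y^T *m Y) *m v^T = (v *m Y^T) *m (v *m Y^T)^T.
    by rewrite trmx_mul trmxK !mulmxA.
  rewrite !mulmxA -(trmxK X) -mulmxA -trmx_mul trmxK.
  move=> /eqP; rewrite paddr_eq0 ?dotmx_ge0 //.
  by case/andP=> /eqP /dotmx_eq0 -> /eqP /dotmx_eq0 ->.
move=> A0; have rowsA i : row i A *m X = 0 /\ row i A *m Y^T = 0.
  by apply: row_case; rewrite -row_mul A0 row0.
by split; apply/row_matrixP => i; rewrite row_mul row0; case: (rowsA i).
Qed.

Lemma row_free_col_mx_orthonormal m1 m2 n (A : 'M[R]_(m1, n)) (B : 'M_(m2, n)) :
  A *m A^T = 1%:M -> A *m B^T = 0 -> row_free B -> row_free (col_mx A B).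
Proof.
move=> AA AB freeB; apply: inj_row_free => v.
rewrite -[v]hsubmxK mul_row_col => v0.
have BA : B *m A^T = 0 by rewrite -[B]trmxK -trmx_mul AB trmx0.
have vl0 : lsubmx v = 0.
  have := congr1 (mulmx^~ A^T) v0.
  by rewrite mulmxDl -!mulmxA AA BA mulmx0 mulmx1 addr0 mul0mx.
move: v0; rewrite vl0 mul0mx add0r => /eqP; rewrite mulmx_free_eq0 // => /eqP ->.
by rewrite row_mx0.
Qed.

End Gram.

Section ChainComplex.
Variables (R : realType) (C : cplx R).

Lemma Lap_kernel_adj p n (A : 'M[R]_(p, cdim C n)) :
  A *m Lap C n = 0 -> A *m (bd C n)^T = 0.
Proof.
case: n A => [|k] A; last by case/mulmx_gram_sum_eq0.
have -> : Lap C 0 = 0 *m (0 : 'M_(cdim C 0, 0))^T + (bd C 0)^T *m bd C 0.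
  by rewrite mul0mx.
by case/mulmx_gram_sum_eq0.
Qed.

Lemma Lap_kernel_bd p k (A : 'M[R]_(p, cdim C k.+1)) :
  A *m Lap C k.+1 = 0 -> A *m bd C k = 0.
Proof. by case/mulmx_gram_sum_eq0. Qed.

Lemma bdmE k (v : 'rV[R]_(cdim C k.+1)) : bdm k v = v *m bd C k.
Proof. by rewrite /bdm; case: eqP => // e; rewrite castmx_id. Qed.

Lemma bdm_eq0 n m (v : 'rV[R]_(cdim C n)) : n != m.+1 -> bdm m v = 0.
Proof. by rewrite /bdm; case: eqP. Qed.

End ChainComplex.

Section HodgeBasis.
Variables (R : realType) (C : cplx R) (H : hbasis C).
Hypotheses (C_chain : is_chain_complex C) (H_hodge : is_hodge_basis H).

Lemma Kb_Lap n : Kb H n *m Lap C n = 0.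
Proof.
case: H_hodge => _ _ _ hK; apply/row_matrixP => i; rewrite row_mul row0.
by apply/(proj2 (hK n)); apply: row_sub.
Qed.

Lemma Kb_bd k : Kb H k.+1 *m bd C k = 0.
Proof. exact/Lap_kernel_bd/Kb_Lap. Qed.

Lemma Kb_bd_adj n : Kb H n *m (bd C n)^T = 0.
Proof. exact/Lap_kernel_adj/Kb_Lap. Qed.

Lemma Lv_im_bd n : exists D, Lv H n = D *m bd C n.
Proof. by case: H_hodge => _ hL _ _; case: (hL n) => _ /andP[/submxP]. Qed.

Lemma Rv_im_bd_adj k : exists D, Rv H k = D *m (bd C k)^T.
Proof. by case: H_hodge => hR _ _ _; case: (hR k) => _ /andP[/submxP]. Qed.

Lemma Lv_bd k : Lv H k.+1 *m bd C k = 0.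
Proof. by have [D ->] := Lv_im_bd k.+1; rewrite -mulmxA C_chain mulmx0. Qed.

Lemma Rv_bd k (i : 'I_(rk H k)) :
  row i (Rv H k) *m bd C k = sv i *: row i (Lv H k).
Proof. by case: H_hodge => _ _ hS _; case: (hS k i). Qed.

Lemma sv_gt0 k (i : 'I_(rk H k)) : 0 < sv i.
Proof. by case: H_hodge => _ _ hS _; case: (hS k i). Qed.

Definition Rmx n : 'M[R]_(rkR H n, cdim C n) :=
  match n with 0 => 0 | k.+1 => Rv H k end.

Lemma row_Rmx n i : row i (Rmx n) = vecR i.
Proof. by case: n i => [[]|k] i. Qed.

Lemma Lv_orthonormal n : Lv H n *m (Lv H n)^T = 1%:M.
Proof. by case: H_hodge => _ hL _ _; case: (hL n). Qed.

Lemma Rmx_orthonormal n : Rmx n *m (Rmx n)^T = 1%:M.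
Proof.
by case: H_hodge => hR _ _ _; case: n => [|k]; [rewrite !flatmx0 | case: (hR k)].
Qed.

Lemma Lv_Rmx_orthogonal n : Lv H n *m (Rmx n)^T = 0.
Proof.
case: n => [|k] /=; first by rewrite thinmx0.
have [D ->] := Lv_im_bd k.+1; have [E ->] := Rv_im_bd_adj k.
by rewrite trmx_mul trmxK mulmxA -(mulmxA D) C_chain mulmx0 mul0mx.
Qed.

Lemma Lv_Kb_orthogonal n : Lv H n *m (Kb H n)^T = 0.
Proof.
have [D ->] := Lv_im_bd n.
by rewrite -mulmxA -[bd C n]trmxK -trmx_mul Kb_bd_adj trmx0 mulmx0.
Qed.

Lemma Rmx_Kb_orthogonal n : Rmx n *m (Kb H n)^T = 0.
Proof.
case: n => [|k] /=; first by rewrite flatmx0.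
by have [D ->] := Rv_im_bd_adj k; rewrite -mulmxA -trmx_mul Kb_bd trmx0 mulmx0.
Qed.

Lemma hodge_row_free n : row_free (col_mx (Lv H n) (col_mx (Rmx n) (Kb H n))).
Proof.
have freeKb : row_free (Kb H n) by case: H_hodge => _ _ _ hK; case: (hK n).
apply: row_free_col_mx_orthonormal; rewrite ?Lv_orthonormal //.
  by rewrite tr_col_mx mul_mx_row Lv_Rmx_orthogonal Lv_Kb_orthogonal row_mx0.
by apply: row_free_col_mx_orthonormal; rewrite ?Rmx_orthonormal ?Rmx_Kb_orthogonal.
Qed.

Definition cell_split n (x : 'rV[R]_#|cells H n|) : 'rV_(rk H n + (rkR H n + hk H n)) :=
  row_mx (\row_i x 0 (enum_rank (inl (inl i) : cells H n)))
    (row_mx (\row_i x 0 (enum_rank (inl (inr i) : cells H n)))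
            (\row_i x 0 (enum_rank (inr i : cells H n)))).

Lemma row_Bmat n (a : cells H n) : row (enum_rank a) (Bmat H n) = cvec a.
Proof. by apply/rowP => c; rewrite !mxE enum_rankK. Qed.

Lemma mulmx_Bmat n (x : 'rV[R]_#|cells H n|) :
  x *m Bmat H n = cell_split x *m col_mx (Lv H n) (col_mx (Rmx n) (Kb H n)).
Proof.
rewrite !mul_row_col !mulmx_sum_row (reindex (@enum_rank _)); last first.
  by exists enum_val => ? _; [rewrite enum_rankK | rewrite enum_valK].
under eq_bigr do rewrite row_Bmat.
rewrite !big_sumType /= addrA; congr (_ + _ + _); apply: eq_bigr => i _;
  by rewrite mxE // row_Rmx.
Qed.

Lemma Bmat_row_free n : row_free (Bmat H n).
Proof.
apply: inj_row_free => x; rewrite mulmx_Bmat => /eqP.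
rewrite mulmx_free_eq0 ?hodge_row_free // !row_mx_eq0.
case/and3P=> /eqP xL /eqP xR /eqP xK.
apply/rowP => j; rewrite mxE -(enum_valK j); case: (enum_val j) => [[i|i]|i].
- by move/rowP: xL => /(_ i); rewrite !mxE.
- by move/rowP: xR => /(_ i); rewrite !mxE.
- by move/rowP: xK => /(_ i); rewrite !mxE.
Qed.

Lemma ccoord_cvec n (a b : cells H n) : ccoord b (cvec a) = (a == b)%:R.
Proof.
rewrite /ccoord -row_Bmat rowE mulmxKp ?Bmat_row_free // mxE /=.
by rewrite (inj_eq enum_rank_inj) eq_sym.
Qed.

Lemma ccoordZ n (b : cells H n) c w : ccoord b (c *: w) = c * ccoord b w.
Proof. by rewrite /ccoord -scalemxAl mxE. Qed.

Lemma ccoord0 n (b : cells H n) : ccoord b 0 = 0.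
Proof. by rewrite /ccoord mul0mx mxE. Qed.

Lemma hmatch_edge x y : hmatch H x y = edge (hcf H) x y.
Proof.
case: x y => n a [m b]; rewrite /edge /hcf /=.
have [e|nm] := eqVneq n m.+1; last first.
  rewrite bdm_eq0 // ccoord0 eqxx.
  by case: a b => [[?|?]|?] [[?|?]|?] //=; rewrite (negbTE nm).
subst n; rewrite bdmE; case: a => [[i|i]|i] /=.
- by rewrite -row_mul Lv_bd row0 ccoord0 eqxx.
- rewrite Rv_bd ccoordZ (ccoord_cvec (inl (inl i))).
  case: b => [[j|j]|j] /=; rewrite ?mulr0 ?eqxx //.
  by rewrite mulf_eq0 negb_or !(gt_eqF (sv_gt0 _)) andbT pnatr_eq0 eqb0 negbK.
- by rewrite -row_mul Kb_bd row0 ccoord0 eqxx.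
Qed.

Lemma hmatch_functional x y1 y2 : hmatch H x y1 -> hmatch H x y2 -> y1 = y2.
Proof.
case: x => n [[i|i]|i] //.
case: y1 => m1 [[j1|j1]|j1] //; case: y2 => m2 [[j2|j2]|j2] //=.
move=> /andP[/andP[/eqP en /eqP ij1] _] /andP[/andP[/eqP em /eqP ij2] _].
subst n; move/succn_inj: em => em; subst m2.
by rewrite (val_inj (etrans (esym ij1) ij2)).
Qed.

Lemma hmatch_injective x1 x2 y : hmatch H x1 y -> hmatch H x2 y -> x1 = x2.
Proof.
case: y => m [[j|j]|j]; case: x1 => n1 [[i1|i1]|i1] //; case: x2 => n2 [[i2|i2]|i2] //=.
move=> /andP[/andP[/eqP e1 /eqP ij1] _] /andP[/andP[/eqP e2 /eqP ij2] _].
subst n1 n2.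
by rewrite (val_inj (etrans ij1 (esym ij2))).
Qed.

Lemma hmatch_chain_free x y z : hmatch H x y -> hmatch H y z -> False.
Proof. by case: x y z => n [[?|?]|?] [m [[?|?]|?]] [p [[?|?]|?]]. Qed.

Lemma hmatch_deg x y : hmatch H x y -> tag x = (tag y).+1.
Proof. by case: x y => n [[?|?]|?] [m [[?|?]|?]] //= /andP[/andP[/eqP]]. Qed.

Lemma critical_Kcell n (i : 'I_(hk H n)) : critical (hmatch H) (existT _ n (inr i)).
Proof. by move=> [m [[?|?]|?]]. Qed.

Lemma critical_cellP n (a : cells H n) :
  critical (hmatch H) (existT _ n a) -> exists i, a = inr i.
Proof.
case: a => [[i|i]|i] crit; last by exists i.
- have [_] := crit (existT _ n.+1 (inl (inr i) : cells H n.+1)).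
  by rewrite /= !eqxx (gt_eqF (sv_gt0 _)).
- case: n i crit => [[] //|k] i crit.
  have [] := crit (existT _ k (inl (inl i) : cells H k)).
  by rewrite /= !eqxx (gt_eqF (sv_gt0 _)).
Qed.

Lemma Lap_kernel_Kb n (v : 'rV[R]_(cdim C n)) : v *m Lap C n = 0 <-> (v <= Kb H n)%MS.
Proof. by case: H_hodge => _ _ _ hK; apply: iff_sym (proj2 (hK n) v). Qed.

Lemma sum_cells_Kb n (c : cells H n -> R) :
  (forall i, c (inl i) = 0) -> \sum_a c a *: cvec a = (\row_i c (inr i)) *m Kb H n.
Proof.
move=> c0; rewrite big_sumType /= big1 ?add0r => [|i _]; last by rewrite c0 scale0r.
by rewrite mulmx_sum_row; apply: eq_bigr => i _; rewrite mxE.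
Qed.

Lemma Lap_kernel_critical_span n (v : 'rV[R]_(cdim C n)) :
  v *m Lap C n = 0 <->
  exists c : cells H n -> R,
    (forall a, ~ critical (hmatch H) (existT _ n a) -> c a = 0)
    /\ v = \sum_a c a *: cvec a.
Proof.
rewrite Lap_kernel_Kb; split.
- case/submxP => D ->; exists (fun a => if a is inr i then D 0 i else 0); split.
    by case=> [[i|i]|i] // ncrit; case: ncrit; apply: critical_Kcell.
  by rewrite sum_cells_Kb //; congr (_ *m _); apply/rowP => i; rewrite mxE.
- case=> c [c0 ->]; rewrite sum_cells_Kb ?submxMl // => i.
  by apply: c0 => /critical_cellP [j].
Qed.

End HodgeBasis.

Theorem mainTheorem4 (R : realType) (C : cplx R) (N : nat) (H : hbasis C) :
  is_chain_complex C -> finite_type C N -> is_hodge_basis H ->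
  [/\ (* M^Delta is a Morse matching *)
      is_morse_matching (fun x : gcell H => tag x) (hcf H) (hmatch H),
      (* the critical cells of degree n span Ker Delta_n *)
      (forall (n : nat) (v : 'rV[R]_(cdim C n)),
         v *m Lap C n = 0 <->
         exists c : cells H n -> R,
           (forall a : cells H n, ~ critical (hmatch H) (existT _ n a) -> c a = 0)
           /\ v = \sum_(a : cells H n) c a *: cvec a)
    & (* the boundary of the Morse complex C^{M^Delta} is zero *)
      (forall x y : gcell H, critical (hmatch H) x -> critical (hmatch H) y ->
         (tag y).+1 = tag x ->
         Gamma (hcf H) (hmatch H) (uemb N) y x = 0)].
Proof.
move=> C_chain _ H_hodge; split.
- apply: edge_matching_is_morse.
  + exact: hmatch_edge.
  + exact: hmatch_functional.
  + exact: hmatch_injective.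
  + exact: hmatch_chain_free.
  + exact: hmatch_deg.
- exact: Lap_kernel_critical_span.
- move=> x y crit_x _ deg_xy.
  apply: (Gamma_critical_eq0 (hmatch_edge C_chain H_hodge) _ crit_x).
  by apply/eqP => yx; subst y; apply: (n_Sn _ (esym deg_xy)).
Qed.
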